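(* Let $\mathbf A=[\mathbf a_1\ \cdots\ \mathbf a_n]\in\mathbb R^{m\times n}$, let $\mathbf x^0\in\mathbb R^n$ and $\mathcal S:=\mathrm{supp}(\mathbf x^0)$. Suppose $\mathbf A_{\mathcal S}^\top\mathbf A_{\mathcal S}$ is invertible and $$\|(\mathbf A_{\mathcal S}^\top\mathbf A_{\mathcal S})^{-1}\|_2\le 2,\qquad \max_{i\in\mathcal S^c}\|\mathbf A_{\mathcal S}^\top\mathbf a_i\|_2\le 1,$$ and there exists $\mathbf y\in\mathbb R^m$ such that $\mathbf v=\mathbf A^\top\mathbf y$ satisfies $$\|\mathbf v_{\mathcal S}-\mathrm{sign}(\mathbf x^0_{\mathcal S})\|_2\le 1/4,\qquad \|\mathbf v_{\mathcal S^c}\|_\infty\le 1/4.$$ Then for every $\alpha>0$ with $\alpha\ge 8\|\mathbf x^0\|_2$, $\mathbf x^0$ is the unique solution of problem (P2) with $\mathbf b=\mathbf A\mathbf x^0$.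
   Context: Problem (P2) is $\min_{\mathbf x}\{\|\mathbf x\|_1+\frac{1}{2\alpha}\|\mathbf x\|_2^2:\ \mathbf A\mathbf x=\mathbf b\}$. $\mathbf A_{\mathcal S}$ is the submatrix of columns of $\mathbf A$ indexed by $\mathcal S$; $\mathbf v_{\mathcal S}$ is the restriction of $\mathbf v$ to $\mathcal S$; $\mathrm{sign}$ acts componentwise; $\|\cdot\|_2$ on matrices is the spectral norm. *)

From HB Require Import structures.
From mathcomp Require Import all_boot all_order all_algebra.
Set Implicit Arguments. Unset Strict Implicit. Unset Printing Implicit Defensive.
Import Order.TTheory GRing.Theory Num.Theory.
Local Open Scope ring_scope.

Section Defs.
Variable R : rcfType.

Definition norm2 k (v : 'cV[R]_k) : R := Num.sqrt (\sum_i (v i 0) ^+ 2).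
Definition norm1 k (v : 'cV[R]_k) : R := \sum_i `|v i 0|.
Definition norminf k (v : 'cV[R]_k) : R := \big[Num.max/0]_i `|v i 0|.

Definition specnorm_le p q (M : 'M[R]_(p, q)) (c : R) : Prop :=
  forall x : 'cV[R]_q, norm2 (M *m x) <= c * norm2 x.

Definition supp n (x : 'cV[R]_n) : {set 'I_n} := [set i | x i 0 != 0].

Definition colS m n (A : 'M[R]_(m, n)) (S : {set 'I_n}) : 'M[R]_(m, #|S|) :=
  \matrix_(i, j) A i (enum_val j).

Definition restr n (v : 'cV[R]_n) (S : {set 'I_n}) : 'cV[R]_#|S| :=
  \col_j v (enum_val j) 0.

Definition sgnv k (v : 'cV[R]_k) : 'cV[R]_k := \col_j Num.sg (v j 0).

Definition P2obj (alpha : R) n (x : 'cV[R]_n) : R :=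
  norm1 x + (2 * alpha)^-1 * norm2 x ^+ 2.

Definition P2_solution m n (A : 'M[R]_(m, n)) (b : 'cV[R]_m) (alpha : R)
  (x : 'cV[R]_n) : Prop :=
  A *m x = b /\ forall z, A *m z = b -> P2obj alpha x <= P2obj alpha z.

Definition P2_unique_solution m n (A : 'M[R]_(m, n)) (b : 'cV[R]_m) (alpha : R)
  (x : 'cV[R]_n) : Prop :=
  P2_solution A b alpha x /\ forall z, P2_solution A b alpha z -> z = x.

End Defs.

(* The proof is the classical dual-certificate argument.
   1. Euclidean toolkit: inner product, Cauchy-Schwarz, triangle inequality.
   2. Certificate lemma: if some w = A^T y satisfies
        w_i = sign(x0_i) + x0_i / alpha   on S = supp x0,
        |w_i| <= 1                        off S,
      then every feasible z obeys P2(z) >= P2(x0) + (2 alpha)^-1 ||z - x0||^2,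
      so x0 is the unique solution.  This follows coordinatewise from the
      subgradient inequality of t |-> |t| + (2 alpha)^-1 t^2, summed, using
      <w, z - x0> = <y, A (z - x0)> = 0.
   3. Construction: the inexact certificate v = A^T y of the hypothesis is
      corrected by A^T A_S u with u = (A_S^T A_S)^-1 d, where d is the defect
      of v on S.  On S the correction fixes v exactly; off S it moves v_i by
      <A_S^T a_i, u>, of size at most ||u|| <= 2 ||d|| <= 3/4, so the new
      certificate stays within [-1, 1] there. *)
From HB Require Import structures.
From mathcomp Require Import all_boot all_order all_algebra.
From mathcomp Require Import ring lra.
Import Order.TTheory GRing.Theory Num.Theory.
Set Implicit Arguments. Unset Strict Implicit. Unset Printing Implicit Defensive.
Local Open Scope ring_scope.

Section Euclid.
Variable R : rcfType.

(* Cauchy-Schwarz for finite sums, via Lagrange's identity. *)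
Lemma cauchy_schwarz_sum k (a b : 'I_k -> R) :
  (\sum_i a i * b i) ^+ 2 <= (\sum_i a i ^+ 2) * (\sum_i b i ^+ 2).
Proof.
have lagrange : \sum_i \sum_j (a i * b j - a j * b i) ^+ 2 =
   2 * ((\sum_i a i ^+ 2) * (\sum_i b i ^+ 2) - (\sum_i a i * b i) ^+ 2).
  transitivity (\sum_i \sum_j (a i ^+ 2 * b j ^+ 2 + b i ^+ 2 * a j ^+ 2
                 - 2 * ((a i * b i) * (a j * b j)))).
    by apply: eq_bigr => i _; apply: eq_bigr => j _; ring.
  under eq_bigr => i _ do rewrite sumrB big_split /= -!mulr_sumr.
  by rewrite sumrB big_split /= -!mulr_suml -mulr_sumr -mulr_suml; ring.
have : 0 <= \sum_i \sum_j (a i * b j - a j * b i) ^+ 2.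
  by apply: sumr_ge0 => i _; apply: sumr_ge0 => j _; apply: sqr_ge0.
by rewrite lagrange; nra.
Qed.

Definition dot k (u v : 'cV[R]_k) : R := \sum_i u i 0 * v i 0.

Lemma sumsq_ge0 k (v : 'cV[R]_k) : 0 <= \sum_i v i 0 ^+ 2.
Proof. by apply: sumr_ge0 => i _; apply: sqr_ge0. Qed.

Lemma norm2_ge0 k (v : 'cV[R]_k) : 0 <= norm2 v.
Proof. exact: sqrtr_ge0. Qed.

Lemma norm2_sq k (v : 'cV[R]_k) : norm2 v ^+ 2 = \sum_i v i 0 ^+ 2.
Proof. by rewrite /norm2 sqr_sqrtr // sumsq_ge0. Qed.

Lemma dot_le k (u v : 'cV[R]_k) : `|dot u v| <= norm2 u * norm2 v.
Proof.
rewrite -sqrtr_sqr /norm2 -sqrtrM ?sumsq_ge0 //.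
by apply: ler_wsqrtr; apply: cauchy_schwarz_sum.
Qed.

Lemma dot_mulmx p q (B : 'M[R]_(p, q)) (u : 'cV[R]_p) (v : 'cV[R]_q) :
  dot u (B *m v) = dot (B^T *m u) v.
Proof.
rewrite /dot; under eq_bigr => i _ do rewrite mxE mulr_sumr.
rewrite exchange_big /=; apply: eq_bigr => j _; rewrite mxE mulr_suml.
by apply: eq_bigr => i _; rewrite !mxE; ring.
Qed.

Lemma trmx_mul_entry p q (B : 'M[R]_(p, q)) (v : 'cV[R]_p) i :
  (B^T *m v) i 0 = dot (col i B) v.
Proof. by rewrite mxE; apply: eq_bigr => r _; rewrite !mxE. Qed.

Lemma norm2D k (u v : 'cV[R]_k) : norm2 (u + v) <= norm2 u + norm2 v.
Proof.
have expand : norm2 (u + v) ^+ 2 = norm2 u ^+ 2 + 2 * dot u v + norm2 v ^+ 2.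
  rewrite !norm2_sq /dot mulr_sumr -!big_split /=.
  by apply: eq_bigr => i _; rewrite mxE; ring.
have sq_le : norm2 (u + v) ^+ 2 <= (norm2 u + norm2 v) ^+ 2.
  by rewrite expand; have := dot_le u v; have := ler_norm (dot u v); nra.
by rewrite -(@ler_pXn2r _ 2) // ?nnegrE ?addr_ge0 ?norm2_ge0.
Qed.

Lemma norm2N k (u : 'cV[R]_k) : norm2 (- u) = norm2 u.
Proof. by rewrite /norm2; congr Num.sqrt; apply: eq_bigr => i _; rewrite mxE sqrrN. Qed.

Lemma norm2Z k c (u : 'cV[R]_k) : norm2 (c *: u) = `|c| * norm2 u.
Proof.
rewrite /norm2 -sqrtr_sqr -sqrtrM ?sqr_ge0 //; congr Num.sqrt.
by rewrite mulr_sumr; apply: eq_bigr => i _; rewrite mxE exprMn.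
Qed.

End Euclid.

Section Restriction.
Variables (R : rcfType) (n : nat).
Implicit Types (v : 'cV[R]_n) (S : {set 'I_n}).

Lemma norm2_restr_le v S : norm2 (restr v S) <= norm2 v.
Proof.
apply: ler_wsqrtr.
have -> : \sum_j (restr v S) j 0 ^+ 2 = \sum_(i in S) v i 0 ^+ 2.
  by rewrite [RHS]big_enum_val; apply: eq_bigr => j _; rewrite mxE.
rewrite big_mkcond /=; apply: ler_sum => i _.
by case: ifP => // _; apply: sqr_ge0.
Qed.

Lemma entry_le_norminf v S i : i \in S -> `|v i 0| <= norminf (restr v S).
Proof.
move=> iS; have := le_bigmax 0 (fun j => `|restr v S j 0|) (enum_rank_in iS i).
by rewrite /= mxE enum_rankK_in.
Qed.

Lemma col_colS m (A : 'M[R]_(m, n)) S j : col j (colS A S) = col (enum_val j) A.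
Proof. by apply/matrixP => r k; rewrite !mxE. Qed.

End Restriction.

Section Certificate.
Variables (R : rcfType) (alpha : R).
Hypothesis alpha_gt0 : 0 < alpha.

Let c := (2 * alpha)^-1.

Lemma c_gt0 : 0 < c.
Proof. by rewrite invr_gt0 mulr_gt0. Qed.

(* Subgradient inequality for f(t) = |t| + c t^2 at a, strengthened by the
   quadratic term: w is a subgradient of f at a (when a != 0 it is exactly
   f'(a) = sign a + 2 c a; when a = 0 it is any point of [-1, 1]). *)
Lemma coord_growth (a b w : R) :
  (a != 0 -> w = Num.sg a + alpha^-1 * a) -> (a = 0 -> `|w| <= 1) ->
  `|a| + c * a ^+ 2 + c * (b - a) ^+ 2 + w * (b - a) <= `|b| + c * b ^+ 2.
Proof.
have two_c : alpha^-1 = 2 * c.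
  by rewrite /c invfM mulrA divff ?pnatr_eq0 // mul1r.
move=> on_supp off_supp; have [a0|a_neq0] := eqVneq a 0.
  have w_le := off_supp a0; rewrite a0 normr0 subr0 expr0n mulr0.
  have := ler_norm (w * b); rewrite normrM.
  have := ler_wpM2r (normr_ge0 b) w_le; rewrite mul1r; lra.
have sg_le : Num.sg a * b <= `|b|.
  by rewrite (le_trans (ler_norm _)) // normrM normr_sg a_neq0 mul1r.
rewrite (on_supp a_neq0) two_c (normrEsg a); have := c_gt0; nra.
Qed.

Variables (m n : nat) (A : 'M[R]_(m, n)) (x0 : 'cV[R]_n) (y : 'cV[R]_m).

Hypothesis cert_supp :
  forall i, x0 i 0 != 0 -> (A^T *m y) i 0 = Num.sg (x0 i 0) + alpha^-1 * x0 i 0.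
Hypothesis cert_off : forall i, x0 i 0 = 0 -> `|(A^T *m y) i 0| <= 1.

Lemma P2obj_growth z : A *m z = A *m x0 ->
  P2obj alpha x0 + c * norm2 (z - x0) ^+ 2 <= P2obj alpha z.
Proof.
move=> feas; set w := A^T *m y.
have orth : dot w (z - x0) = 0.
  by rewrite -dot_mulmx mulmxBr feas subrr /dot big1 // => r _; rewrite mxE mulr0.
have coords : \sum_i (`|x0 i 0| + c * x0 i 0 ^+ 2 + c * (z - x0) i 0 ^+ 2
           + w i 0 * (z - x0) i 0) <= \sum_i (`|z i 0| + c * z i 0 ^+ 2).
  apply: ler_sum => i _.
  have -> : (z - x0) i 0 = z i 0 - x0 i 0 by rewrite !mxE.
  by apply: coord_growth; [exact: cert_supp | exact: cert_off].
move: orth coords; rewrite /dot /P2obj /norm1 !norm2_sq !big_split /= -!mulr_sumr.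
rewrite -/c; lra.
Qed.

Lemma certificate_unique : P2_unique_solution A (A *m x0) alpha x0.
Proof.
have cpos := c_gt0.
split.
  split=> // z feas; apply: le_trans (P2obj_growth feas).
  by rewrite lerDl mulr_ge0 ?sqr_ge0 // ltW.
move=> z [feas zmin]; have := P2obj_growth feas; have := zmin x0 erefl.
move=> x0_ge z_ge; have : c * norm2 (z - x0) ^+ 2 <= 0 by lra.
rewrite pmulr_rle0 // norm2_sq => sq_le0.
have : \sum_i (z - x0) i 0 ^+ 2 == 0 by rewrite eq_le sq_le0 sumsq_ge0.
move=> /eqP/psumr_eq0P eq0; apply/matrixP => i j; rewrite (ord1 j).
have /eqP := eq0 (fun i _ => sqr_ge0 ((z - x0) i 0)) i isT.
by rewrite sqrf_eq0 !mxE subr_eq0 => /eqP.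
Qed.

End Certificate.

Section Correction.
Variables (R : rcfType) (m n : nat) (A : 'M[R]_(m, n)) (S : {set 'I_n}).
Let AS := colS A S.

Lemma correction_on_supp (y : 'cV[R]_m) (u : 'cV[R]_#|S|) j :
  (A^T *m (y + AS *m u)) (enum_val j) 0 =
  (A^T *m y) (enum_val j) 0 + (AS^T *m AS *m u) j 0.
Proof.
by rewrite mulmxDr mxE [X in _ + X]trmx_mul_entry -col_colS -trmx_mul_entry mulmxA.
Qed.

Lemma correction_off_supp (y : 'cV[R]_m) (u : 'cV[R]_#|S|) i :
  (A^T *m (y + AS *m u)) i 0 = (A^T *m y) i 0 + dot (AS^T *m col i A) u.
Proof. by rewrite mulmxDr mxE [X in _ + X]trmx_mul_entry dot_mulmx. Qed.

End Correction.

(* The defect d = sign(x0_S) + x0_S / alpha - v_S of the inexact certificate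
   is small: ||v_S - sign(x0_S)|| <= 1/4 and ||x0_S|| / alpha <= 1/8. *)
Lemma defect_bound (R : rcfType) n (x0 v : 'cV[R]_n) (S : {set 'I_n}) (alpha : R) :
  0 < alpha -> 8 * norm2 x0 <= alpha ->
  norm2 (restr v S - sgnv (restr x0 S)) <= 4^-1 ->
  norm2 (sgnv (restr x0 S) + alpha^-1 *: restr x0 S - restr v S) <= 3 / 8.
Proof.
move=> alpha_gt0 x0_le v_near.
have -> : sgnv (restr x0 S) + alpha^-1 *: restr x0 S - restr v S =
          - (restr v S - sgnv (restr x0 S)) + alpha^-1 *: restr x0 S.
  by apply/matrixP => a b; rewrite !mxE; ring.
apply: le_trans (norm2D _ _) _; rewrite norm2N norm2Z ger0_norm ?invr_ge0 ?(ltW alpha_gt0) //.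
have : alpha^-1 * norm2 (restr x0 S) <= 8^-1.
  rewrite mulrC ler_pdivrMr //; have := norm2_restr_le x0 S; lra.
lra.
Qed.

Theorem mainTheorem7 (R : rcfType) (m n : nat) (A : 'M[R]_(m, n)) (x0 : 'cV[R]_n) :
  let S := supp x0 in
  let AS := colS A S in
  (AS^T *m AS) \in unitmx ->
  specnorm_le (invmx (AS^T *m AS)) 2 ->
  (forall i : 'I_n, i \notin S -> norm2 (AS^T *m col i A) <= 1) ->
  (exists y : 'cV[R]_m,
      let v := A^T *m y in
      norm2 (restr v S - sgnv (restr x0 S)) <= 4^-1 /\
      norminf (restr v (~: S)) <= 4^-1) ->
  forall alpha : R, 0 < alpha -> 8 * norm2 x0 <= alpha ->
  P2_unique_solution A (A *m x0) alpha x0.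
Proof.
move=> S AS gram_unit gram_inv col_le [y [v_near v_small]] alpha alpha_gt0 x0_le.
set v := A^T *m y in v_near v_small.
set d := sgnv (restr x0 S) + alpha^-1 *: restr x0 S - restr v S.
set u := invmx (AS^T *m AS) *m d.
have d_le : norm2 d <= 3 / 8 by exact: defect_bound.
have u_le : norm2 u <= 3 / 4 by apply: le_trans (gram_inv d) _; lra.
have inS i : (i \in S) = (x0 i 0 != 0) by rewrite inE.
apply: (certificate_unique alpha_gt0 (y := y + AS *m u)) => i x0i.
  have iS : i \in S by rewrite inS.
  rewrite -(enum_rankK_in iS iS) correction_on_supp /u mulKVmx //.
  by rewrite !mxE enum_rankK_in //; ring.
have iSc : i \notin S by rewrite inS x0i eqxx.
have v_i : `|v i 0| <= 4^-1.
  by apply: le_trans v_small; apply: entry_le_norminf; rewrite in_setC.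
have corr_i : `|dot (AS^T *m col i A) u| <= 3 / 4.
  apply: le_trans (dot_le _ _) _; rewrite -[3 / 4]mul1r.
  by apply: ler_pM => //; [exact: norm2_ge0 | exact: norm2_ge0 | exact: col_le].
by rewrite correction_off_supp; apply: le_trans (ler_normD _ _) _; lra.
Qed.
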